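(* For any $u\in S_n$ and double braid word $\beta$ with $u\le\beta$, the quiver $\widetilde Q_{u,\beta}$ is really full rank, i.e. the rows of its exchange matrix $(b_{c,d})_{c\in J,\ d\ \mathrm{mutable}}$ span $\mathbb Z^{k}$ over $\mathbb Z$, where $k$ is the number of mutable vertices.
   Context: Notation: $n\ge2$, $I=\{1,\dots,n-1\}$, $\pm I=I\sqcup(-I)$; permutations composed as functions, $s_i=(i\ i+1)$, Bruhat order $\le$, Demazure product $*$. Double braid word $\beta=(i_1,\dots,i_m)\in(\pm I)^m$; $s_i^+=s_i,s_i^-=\mathrm{id}$ if $i>0$, $s_i^+=\mathrm{id},s_i^-=s_{-i}$ if $i<0$; $u\le\beta$ means $u\le s^-_{i_m}*\dots*s^-_{i_1}*s^+_{i_1}*\dots*s^+_{i_m}$. $s_i\rhd u=s_iu$ if $s_iu<u$ else $u$; $u\lhd s_i=us_i$ if $us_i<u$ else $u$; identity acts trivially. $u_{(m)}=u$, $u_{(c-1)}=s^-_{i_c}\rhd u_{(c)}\lhd s^+_{i_c}$; $J=\{c:u_{(c)}=u_{(c-1)}\}$ (solid), others hollow. Graph $G_{u,\beta}$ in $\mathbb R^3$ ($(i,j,t)$): dots $(i,u_{(c)}(i),c)$; strands time $c-1\to c$: unchanged if $c$ solid; rows $j,j+1$ swapped if $c$ hollow with $i_c=j>0$; columns $i,i+1$ swapped if hollow with $i_c=-i$. Solid $c$ with $i_c=j>0$, dots $(i,j),(i',j+1)$ ($i<i'$): black $p$ on the strand through $(i,j)$, white $q$ on that through $(i',j+1)$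 at time $c-\frac12$, bridge $b_c=pq$; solid $c$ with $i_c=-i$, dots $(i,j),(i+1,j')$ ($j<j'$): white $p$ through $(i,j)$, black $q$ through $(i+1,j')$. Start $p$, end $q$. Vertices: bridge endpoints and strand ends at $t=0,m$; edges: bridges and strand pieces. Cyclic orders: counterclockwise at white, clockwise at black, in projection $(i,j,t)\mapsto(t,j)$. $\mathbf S$ thickened oriented surface, $\mathbb M$ the $n$ marked points from the time-$0$ ends, $\Lambda=H_1(\mathbf S,\mathbb M;\mathbb Z)$, $\Lambda^*=H_1(\mathbf S\setminus\mathbb M,\partial\mathbf S\setminus\mathbb M;\mathbb Z)$, intersection pairing $\langle\cdot,\cdot\rangle:\Lambda\otimes\Lambda^*\to\mathbb Z$. Relative cycles: monotone curves in $\Gamma(z)$ (strictly increasing coordinates, dot endpoints, no other dots), multicurves ordered componentwise. For $c\in J$, $\gamma^{c,c-1}$ joins the two dots on the strands of $b_c$; from $r$ to $r-1$: hollow $r$: continuous deformation keeping dots on the same side as their strand-mates; solid $r$ with $i_r=j>0$: with $D,D'$ the dots in rows $j,j+1$, delete the part strictly between $D,D'$ of each curve passing weakly above $D$ and weakly below $D'$; solid $r$ with $i_r=-i$: $D,D'$ in columns $i,i+1$, same for curves weakly right of $D$ and weakly left of $D'$. These sweep, with $b_c$, a disk $D_c$ whose boundary is graph edges plus $\gamma^{c,0}$; $c$ mutable iff $\gamma^{c,0}=\emptyset$, frozen otherwise. $C_c=\partial D_c\setminus\gamma^{c,0}\in\Lambda$, oriented with $b_c$ from start to end. $\widetilde Q_{u,\beta}$: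 vertices $J$, frozen vertices the frozen indices; exchange matrix $b_{c,d}=\langle C_c,C_d\rangle$ for $c\in J$, $d$ mutable (= #arrows $c\to d$ minus #arrows $d\to c$). *)

From HB Require Import structures.
From mathcomp Require Import all_boot all_order all_algebra all_fingroup.
Import GRing.Theory Num.Theory.

(* ---------- permutations of 'I_n (0-based; the letter i in I = {1..n-1}
   is the simple transposition swapping 0-based i-1 and i) ---------- *)
Definition sref (n i : nat) : {perm 'I_n} :=
  match (insub i.-1 : option 'I_n), (insub i : option 'I_n) with
  | Some a, Some b => tperm a b
  | _, _ => 1%g
  end.

(* composition as functions: pcomp u v = u o v *)
Definition pcomp n (u v : {perm 'I_n}) : {perm 'I_n} := (v * u)%g.

Definition plen n (w : {perm 'I_n}) : nat :=
  #|[set p : 'I_n * 'I_n | (p.1 < p.2)%N && (w p.2 < w p.1)%N]|.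

Definition bruhat_cover n : rel {perm 'I_n} := fun x y =>
  [exists a : 'I_n, exists b : 'I_n,
     [&& a != b, y == pcomp n x (tperm a b) & (plen n x < plen n y)%N]].
Definition bruhat_le n (x y : {perm 'I_n}) : bool := connect (bruhat_cover n) x y.
Definition bruhat_lt n (x y : {perm 'I_n}) : bool := bruhat_le n x y && (x != y).

Definition wf_word n (beta : seq int) : bool :=
  all (fun i : int => (i != 0%R) && (absz i < n)%N) beta.

Definition splus n (i : int) : {perm 'I_n} :=
  if (0 < i)%R then sref n (absz i) else 1%g.
Definition sminus n (i : int) : {perm 'I_n} :=
  if (i < 0)%R then sref n (absz i) else 1%g.

Definition dem n (x s : {perm 'I_n}) : {perm 'I_n} :=
  if (plen n x < plen n (pcomp n x s))%N then pcomp n x s else x.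
Definition demazure n (ws : seq {perm 'I_n}) : {perm 'I_n} := foldl (dem n) 1%g ws.

Definition delta n (beta : seq int) : {perm 'I_n} :=
  demazure n (rev (map (sminus n) beta) ++ map (splus n) beta).

Definition below_word n (u : {perm 'I_n}) (beta : seq int) : bool :=
  bruhat_le n u (delta n beta).

Definition lact n (s u : {perm 'I_n}) : {perm 'I_n} :=
  if bruhat_lt n (pcomp n s u) u then pcomp n s u else u.
Definition ract n (u s : {perm 'I_n}) : {perm 'I_n} :=
  if bruhat_lt n (pcomp n u s) u then pcomp n u s else u.
Definition ustep n (i : int) (w : {perm 'I_n}) : {perm 'I_n} :=
  ract n (lact n (sminus n i) w) (splus n i).

Definition uat n (u : {perm 'I_n}) (beta : seq int) (c : nat) : {perm 'I_n} :=
  foldl (fun w i => ustep n i w) u (rev (drop c beta)).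

(* the letter i_c (1-based) *)
Definition letter (beta : seq int) (c : nat) : int := nth 0%R beta c.-1.

Definition solid n (u : {perm 'I_n}) beta (c : nat) : bool :=
  uat n u beta c == uat n u beta c.-1.

Definition Jset n (u : {perm 'I_n}) beta : seq nat :=
  [seq c <- iota 1 (size beta) | solid n u beta c].

(* ---------- geometry of the dots ----------
   At time c the dot of index k : 'I_n lies in row k and column u_(c)(k).  Strands are followed backwards in time: the dot
   of index k at time c continues at time c-1 as the dot of index
   sigma_c(k). *)
Definition sigma n (u : {perm 'I_n}) beta (c : nat) : {perm 'I_n} :=
  if (~~ solid n u beta c) && (0 < letter beta c)%R
  then sref n (absz (letter beta c)) else 1%g.

(* strand through dot k at time c, named by its index at time 0
   (= its time-0 end) *)
Fixpoint strand_at n (u : {perm 'I_n}) beta (c : nat) (k : 'I_n) : 'I_n :=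
  match c with
  | 0 => k
  | c'.+1 => strand_at n u beta c' (sigma n u beta c'.+1 k)
  end.

(* the two dots (D, D') attached to the bridge b_c (c solid):
   i_c = j > 0 : the dots in rows j, j+1 (1-based);
   i_c = -i    : the dots in columns i, i+1 (1-based).
   p (start of b_c) is on the strand of D, q (end) on that of D'. *)
Definition bridge_dots n (u : {perm 'I_n}) beta (c : nat) : option ('I_n * 'I_n) :=
  let w := uat n u beta c in
  let i := letter beta c in
  if (0 < i)%R then
    match [pick k : 'I_n | val k == (absz i).-1], [pick k : 'I_n | val k == absz i] with
    | Some D, Some D' => Some (D, D')
    | _, _ => None
    end
  else
    match [pick k : 'I_n | val (w k) == (absz i).-1],
          [pick k : 'I_n | val (w k) == absz i] with
    | Some D, Some D' => Some (D, D')
    | _, _ => None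
    end.

(* ---------- monotone curves ----------
   A monotone curve in Gamma(z) is given up to isotopy by its start dot a,
   its end dot b (both coordinates strictly increasing from a to b) and the
   set S of dots strictly inside the rectangle spanned by a, b which lie
   above (north-west of) the curve. *)
Definition curve n := ('I_n * 'I_n * {set 'I_n})%type.

Definition inrect n (w : {perm 'I_n}) (a b k : 'I_n) : bool :=
  [&& (w a < w k)%N, (w k < w b)%N, (a < k)%N & (k < b)%N].

(* side of dot k w.r.t. the curve (w gives the columns):
   Some true = north-west side, Some false = south-east side,
   None = endpoint or not comparable *)
Definition side n (w : {perm 'I_n}) (cv : curve n) (k : 'I_n) : option bool :=
  let '(a, b, Sab) := cv in
  if (k == a) || (k == b) then None
  else if inrect n w a b k then Some (k \in Sab)
  else if [&& (w a < w k)%N, (w k < w b)%N & (b < k)%N] then Some true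
  else if [&& (w a < w k)%N, (w k < w b)%N & (k < a)%N] then Some false
  else if [&& (a < k)%N, (k < b)%N & (w k < w a)%N] then Some true
  else if [&& (a < k)%N, (k < b)%N & (w b < w k)%N] then Some false
  else None.

(* hollow step r -> r-1: continuous deformation; w = u_(r), w' = u_(r-1),
   s = strand map sigma_r *)
Definition hollow_curve n (w w' s : {perm 'I_n}) (cv : curve n) : curve n :=
  let '(a, b, Sab) := cv in
  (s a, s b,
   [set k | inrect n w' (s a) (s b) k && (side n w cv ((s^-1)%g k) == Some true)]).

(* solid step: delete the part strictly between D and D' of a curve passing
   weakly above D and weakly below D' (row case), resp. weakly right of D and
   weakly left of D' (column case). *)
Definition solid_curve n (w : {perm 'I_n}) (rowcase : bool) (D D' : 'I_n)
    (cv : curve n) : seq (curve n) * nat :=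
  let '(a, b, Sab) := cv in
  if ((D == a) || (side n w cv D == Some (~~ rowcase))) &&
     ((D' == b) || (side n w cv D' == Some rowcase)) then
    ((if a != D then [:: (a, D, [set k in Sab | inrect n w a D k])] else [::]) ++
     (if D' != b then [:: (D', b, [set k in Sab | inrect n w D' b k])] else [::]),
     1%N)
  else ([:: cv], 0%N).

Definition sweep_step n (u : {perm 'I_n}) beta (r : nat) (mc : seq (curve n)) :
    seq (curve n) * nat :=
  let w := uat n u beta r in
  if solid n u beta r then
    match bridge_dots n u beta r with
    | Some (D, D') =>
        let res := map (solid_curve n w (0 < letter beta r)%R D D') mc in
        (flatten (map fst res), sumn (map snd res))
    | None => (mc, 0%N)
    end
  else (map (hollow_curve n w (uat n u beta r.-1) (sigma n u beta r)) mc, 0%N).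

(* from time r down to time 0; also records the number of deletions
   (i.e. of bridges b_e swept) at each step e *)
Fixpoint sweep n (u : {perm 'I_n}) beta (r : nat) (mc : seq (curve n)) :
    seq (curve n) * (nat -> nat) :=
  match r with
  | 0 => (mc, fun _ => 0%N)
  | r'.+1 =>
      let (mc1, k) := sweep_step n u beta r'.+1 mc in
      let (fin, dels) := sweep n u beta r' mc1 in
      (fin, fun e => if e == r'.+1 then k else dels e)
  end.

(* the disk D_c: gamma^{c,c-1} joins D and D' at time c-1 *)
Definition disk n (u : {perm 'I_n}) beta (c : nat) : seq (curve n) * (nat -> nat) :=
  match bridge_dots n u beta c with
  | Some (D, D') => sweep n u beta c.-1 [:: (D, D', set0)]
  | None => ([::], fun _ => 0%N)
  end.

Definition gamma0 n (u : {perm 'I_n}) beta (c : nat) : seq (curve n) :=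
  (disk n u beta c).1.

Definition mutable_vertices n (u : {perm 'I_n}) beta : seq nat :=
  [seq d <- Jset n u beta | nilp (gamma0 n u beta d)].

(* ---------- 1-chains on G_{u,beta} ----------
   A 1-chain C_c is encoded by its coefficients on the bridges b_e (e in J);
   its coefficients on the strand pieces are then determined (each strand is
   a path, and C_c has boundary supported on time-0 ends and vanishes on the
   last pieces): see piece_in / piece_out. *)
Definition Cbridge n (u : {perm 'I_n}) beta (c : nat) (e : nat) : int :=
  ((nat_of_bool (e == c))%:Z - ((disk n u beta c).2 e)%:Z)%R.

Definition endsgn n (u : {perm 'I_n}) beta (s : 'I_n) (e : nat) : int :=
  match bridge_dots n u beta e with
  | Some (D, D') =>
      ((nat_of_bool (strand_at n u beta e D' == s))%:Z
       - (nat_of_bool (strand_at n u beta e D == s))%:Z)%R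
  | None => 0%R
  end.

(* coefficient of the strand piece of s ending at time e - 1/2 *)
Definition piece_in n (u : {perm 'I_n}) beta (x : nat -> int) (s : 'I_n) (e : nat) : int :=
  (- \sum_(e' <- Jset n u beta | (e <= e')%N) endsgn n u beta s e' * x e')%R.
(* coefficient of the strand piece of s starting at time e - 1/2 *)
Definition piece_out n (u : {perm 'I_n}) beta (x : nat -> int) (s : 'I_n) (e : nat) : int :=
  (- \sum_(e' <- Jset n u beta | (e < e')%N) endsgn n u beta s e' * x e')%R.

(* outgoing flows of the chain x at the vertex p_e (atq = false) or q_e
   (atq = true), listed in the counterclockwise cyclic order of the ribbon
   structure, together with a flag telling whether the edge is oriented out
   of the vertex. *)
Definition vflows n (u : {perm 'I_n}) beta (x : nat -> int) (e : nat) (atq : bool) :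
    seq (int * bool) :=
  match bridge_dots n u beta e with
  | Some (D, D') =>
      let s := strand_at n u beta e (if atq then D' else D) in
      let fout := (piece_out n u beta x s e, true) in
      let fin := ((- piece_in n u beta x s e)%R, false) in
      let fbr := ((if atq then - x e else x e)%R, ~~ atq) in
      if (0 < letter beta e)%R then [:: fout; fin; fbr] else [:: fout; fbr; fin]
  | None => [::]
  end.

(* local intersection number at a vertex (y pushed to the left of its edges):
   sum_k y_k * (sum_{i<k} x_i + [h_k outgoing] x_k) *)
Fixpoint locint (acc : int) (xs : seq (int * bool)) (ys : seq int) : int :=
  match xs, ys with
  | (xk, dk) :: xs', yk :: ys' =>
      (yk * (acc + (if dk then xk else 0)) + locint (acc + xk) xs' ys')%R
  | _, _ => 0%R
  end.

Definition pairing n (u : {perm 'I_n}) beta (x y : nat -> int) : int :=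
  (\sum_(e <- Jset n u beta)
     (locint 0 (vflows n u beta x e false) (map fst (vflows n u beta y e false))
      + locint 0 (vflows n u beta x e true) (map fst (vflows n u beta y e true))))%R.

Definition exchange n (u : {perm 'I_n}) beta (c d : nat) : int :=
  pairing n u beta (Cbridge n u beta c) (Cbridge n u beta d).

(** The exchange matrix over all of J, not only its mutable columns, is
    unimodular over Z.  Write each C_c in the basis of bridges: sweeping the
    disk D_c only crosses bridges b_e with e < c, so the coefficient matrix C
    of the cycles is unitriangular.  The pairing of two chains is a sum of
    local contributions at the bridge endpoints; these assemble into the
    bilinear form -x Q y^T with Q = (1 + L_+^T)(1 + L_-), where L_+ and L_-
    are strictly upper triangular (the strand links of the bridges with a
    positive, resp. negative, letter).  Hence (b_{c,d})_{c,d in J} = -C Q C^T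
    has determinant 1. *)
From mathcomp Require Import all_boot all_order all_algebra all_fingroup.
From mathcomp Require Import ring.
Import GRing.Theory Num.Theory.
Set Implicit Arguments.
Unset Strict Implicit.
Local Open Scope ring_scope.

Lemma det_unitrig (R : comPzRingType) k (A : 'M[R]_k) :
  is_trig_mx A -> (forall i, A i i = 1) -> \det A = 1.
Proof. by move=> trigA diagA; rewrite det_trig // big1. Qed.

Lemma pick_distinct_pair (T : finType) (P Q : pred T) :
  (exists a, P a) -> (exists b, Q b) -> (forall a, P a -> ~~ Q a) ->
  exists D D', match [pick a | P a], [pick b | Q b] with
               | Some D, Some D' => Some (D, D')
               | _, _ => None
               end = Some (D, D') /\ D != D'.
Proof.
move=> [a Pa] [b Qb] PnQ.
case: pickP => [D PD | /(_ a)]; last by rewrite Pa.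
case: pickP => [D' QD' | /(_ b)]; last by rewrite Qb.
by exists D, D'; split=> //; apply: contraNneq (PnQ _ PD) => ->.
Qed.

Section ExchangeMatrix.

Variables (n : nat) (u : {perm 'I_n}) (beta : seq int).

Local Notation J := (Jset n u beta).
Local Notation k := (size J).

Lemma Jset_sorted : sorted ltn J.
Proof. exact/sorted_filter/iota_ltn_sorted/ltn_trans. Qed.

Lemma Jset_uniq : uniq J.
Proof. exact/filter_uniq/iota_uniq. Qed.

Lemma Jset_bounds c : c \in J -> (0 < c <= size beta)%N.
Proof. by rewrite mem_filter mem_iota add1n ltnS => /andP[]. Qed.

Definition Jnth (i : 'I_k) : nat := nth 0%N J i.

Lemma Jnth_mem i : Jnth i \in J.
Proof. exact: mem_nth. Qed.

Lemma Jnth_gt0 i : (0 < Jnth i)%N.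
Proof. by case/andP: (Jset_bounds (Jnth_mem i)). Qed.

Lemma ltn_Jnth i j : (Jnth i < Jnth j)%N = (i < j)%N.
Proof.
have mono := sorted_ltn_nth ltn_trans 0%N Jset_sorted.
case: (ltngtP i j) => [ij | ji | ij]; first by apply: mono; rewrite ?inE.
  by apply/negbTE; rewrite -leqNgt ltnW //; apply: mono; rewrite ?inE.
by rewrite /Jnth ij ltnn.
Qed.

Lemma leq_Jnth i j : (Jnth i <= Jnth j)%N = (i <= j)%N.
Proof. by rewrite leqNgt ltn_Jnth -leqNgt. Qed.

Lemma big_Jset (P : pred nat) (F : nat -> int) :
  \sum_(c <- J | P c) F c = \sum_(i < k | P (Jnth i)) F (Jnth i).
Proof. by rewrite (big_nth 0%N) big_mkord. Qed.

Definition Jrow (x : nat -> int) : 'rV[int]_k := \row_i x (Jnth i).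

Definition Jfun (r : 'rV[int]_k) (c : nat) : int :=
  if insub (index c J) is Some i then r 0 i else 0.

Lemma Jfun_nth r i : Jfun r (Jnth i) = r 0 i.
Proof. by rewrite /Jfun /Jnth index_uniq ?Jset_uniq // valK. Qed.

Lemma sweep_dels_gt r mc e : (r < e)%N -> (sweep n u beta r mc).2 e = 0%N.
Proof.
elim: r mc => [//|r IHr] mc /= lt_re.
case: (sweep_step n u beta r.+1 mc) => mc1 dels1.
have := IHr mc1 (ltnW lt_re).
case: (sweep n u beta r mc1) => fin dels /= ->.
by rewrite gtn_eqF.
Qed.

Lemma disk_dels_ge c e : (0 < c <= e)%N -> (disk n u beta c).2 e = 0%N.
Proof.
case/andP=> c_gt0 le_ce; rewrite /disk.
case: bridge_dots => [[D D']|//].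
by apply: sweep_dels_gt; rewrite prednK.
Qed.

Lemma strand_at_inj c : injective (strand_at n u beta c).
Proof. by elim: c => [//|c IHc] x y /= /IHc /perm_inj. Qed.

Lemma solid_bridge_dots c : wf_word n beta -> c \in J ->
  exists D D', bridge_dots n u beta c = Some (D, D') /\ D != D'.
Proof.
move=> wf cJ; have /andP[c_gt0 c_le] := Jset_bounds cJ.
have /(allP wf)/andP[i_neq0 i_lt] : letter beta c \in beta.
  by rewrite /letter mem_nth // prednK.
have i_gt0 : (0 < absz (letter beta c))%N by rewrite absz_gt0.
have i1_lt : ((absz (letter beta c)).-1 < n)%N by rewrite prednK // ltnW.
have adjacent m : m == (absz (letter beta c)).-1 -> m != absz (letter beta c).
  by move=> /eqP ->; rewrite neq_ltn ltn_predL i_gt0.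
rewrite /bridge_dots; set w := uat n u beta c.
case: ifP => _; apply: pick_distinct_pair => [||l]; try exact: adjacent.
- by exists (Ordinal i1_lt).
- by exists (Ordinal i_lt).
- by exists ((w^-1)%g (Ordinal i1_lt)); rewrite permKV.
- by exists ((w^-1)%g (Ordinal i_lt)); rewrite permKV.
Qed.

Lemma piece_out_Jnth x s i :
  piece_out n u beta x s (Jnth i) =
  - \sum_(j < k | (i < j)%N) endsgn n u beta s (Jnth j) * x (Jnth j).
Proof.
rewrite /piece_out big_Jset; congr (- _).
by apply: eq_bigl => j; rewrite ltn_Jnth.
Qed.

Lemma piece_in_Jnth x s i :
  piece_in n u beta x s (Jnth i) =
  piece_out n u beta x s (Jnth i) - endsgn n u beta s (Jnth i) * x (Jnth i).
Proof.
rewrite piece_out_Jnth /piece_in big_Jset.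
under eq_bigl => j do rewrite leq_Jnth.
rewrite (bigD1 i) //= opprD addrC; congr (- _ - _).
by apply: eq_bigl => j; rewrite ltn_neqAle andbC eq_sym.
Qed.

Lemma endsgn_bridge e D D' :
  bridge_dots n u beta e = Some (D, D') -> D != D' ->
  endsgn n u beta (strand_at n u beta e D) e = -1 /\
  endsgn n u beta (strand_at n u beta e D') e = 1.
Proof.
move=> bdE neqDD'; rewrite /endsgn bdE !eqxx.
have /negbTE neq_strands : strand_at n u beta e D' != strand_at n u beta e D.
  by apply: contra neqDD' => /eqP /strand_at_inj ->.
by rewrite neq_strands eq_sym neq_strands.
Qed.

Definition bridge_pairing (x y : nat -> int) (e : nat) : int :=
  locint 0 (vflows n u beta x e false) (map fst (vflows n u beta y e false))
  + locint 0 (vflows n u beta x e true) (map fst (vflows n u beta y e true)).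

Definition strand_gap (x : nat -> int) (e : nat) : int :=
  match bridge_dots n u beta e with
  | Some (D, D') => piece_out n u beta x (strand_at n u beta e D') e
                    - piece_out n u beta x (strand_at n u beta e D) e
  | None => 0
  end.

Lemma bridge_pairingE x y i : wf_word n beta ->
  bridge_pairing x y (Jnth i) =
  (if 0 < letter beta (Jnth i) then y (Jnth i) * strand_gap x (Jnth i)
   else x (Jnth i) * strand_gap y (Jnth i)) - x (Jnth i) * y (Jnth i).
Proof.
move=> wf; have [D [D' [bdE neqDD']]] := solid_bridge_dots wf (Jnth_mem i).
have [endsgnD endsgnD'] := endsgn_bridge bdE neqDD'.
rewrite /bridge_pairing /strand_gap /vflows bdE !piece_in_Jnth endsgnD endsgnD'.
by case: ifP => _ /=; ring.
Qed.

Definition strand_link (e e' : nat) : int :=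
  match bridge_dots n u beta e with
  | Some (D, D') => endsgn n u beta (strand_at n u beta e D') e'
                    - endsgn n u beta (strand_at n u beta e D) e'
  | None => 0
  end.

Lemma strand_gapE x i :
  strand_gap x (Jnth i) =
  - \sum_(j < k | (i < j)%N) strand_link (Jnth i) (Jnth j) * x (Jnth j).
Proof.
rewrite /strand_gap /strand_link; case: bridge_dots => [[D D']|].
  rewrite !piece_out_Jnth opprK addrC -opprB -sumrB; congr (- _).
  by apply: eq_bigr => j _; rewrite mulrBl.
by rewrite big1 ?oppr0 // => j _; rewrite mul0r.
Qed.

Definition link_mx (pos : bool) : 'M[int]_k :=
  \matrix_(i, j) if ((0 < letter beta (Jnth i)) == pos) && (i < j)%N
                 then strand_link (Jnth i) (Jnth j) else 0.

Definition crossing_mx : 'M[int]_k := 1%:M + link_mx false + (link_mx true)^T.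

Lemma link_mx_mulE pos x i :
  (link_mx pos *m (Jrow x)^T) i 0 =
  if (0 < letter beta (Jnth i)) == pos then - strand_gap x (Jnth i) else 0.
Proof.
rewrite mxE strand_gapE opprK; case: eqP => [posE | /eqP/negbTE posN].
  rewrite [RHS]big_mkcond; apply: eq_bigr => j _.
  by rewrite !mxE posE eqxx; case: (i < j)%N; rewrite ?mul0r.
by apply: big1 => j _; rewrite !mxE posN mul0r.
Qed.

Lemma pairingE x y : wf_word n beta ->
  pairing n u beta x y = - (Jrow x *m crossing_mx *m (Jrow y)^T) 0 0.
Proof.
move=> wf; have dotE (a : 'rV[int]_k) (b : 'cV[int]_k) :
  (a *m b) 0 0 = \sum_i a 0 i * b i 0 by rewrite mxE.
have swapE : Jrow x *m (link_mx true)^T *m (Jrow y)^T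
             = (Jrow y *m (link_mx true *m (Jrow x)^T))^T.
  by rewrite !trmx_mul trmxK.
rewrite /crossing_mx !mulmxDr !mulmxDl mulmx1 swapE -mulmxA.
rewrite mxE mxE [(_^T) 0 0]mxE !dotE -!big_split -sumrN.
rewrite -[pairing _ _ _ _ _]/(\sum_(e <- J) bridge_pairing x y e).
rewrite (big_Jset predT).
apply: eq_bigr => i _; rewrite bridge_pairingE // !link_mx_mulE !mxE.
by case: (0 < _) => /=; ring.
Qed.

Definition chain_mx : 'M[int]_k :=
  \matrix_(i, j) Cbridge n u beta (Jnth i) (Jnth j).

Definition exchange_mx : 'M[int]_k := chain_mx *m crossing_mx *m chain_mx^T.

Lemma exchangeE i j : wf_word n beta ->
  exchange n u beta (Jnth i) (Jnth j) = - exchange_mx i j.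
Proof.
move=> wf; rewrite /exchange pairingE //; congr (- _).
rewrite !mxE; apply: eq_bigr => l _; rewrite !mxE; congr (_ * _).
by apply: eq_bigr => m _; rewrite !mxE.
Qed.

Lemma det_chain_mx : \det chain_mx = 1.
Proof.
have dels0 i e : (Jnth i <= e)%N -> (disk n u beta (Jnth i)).2 e = 0%N.
  by move=> le_ie; rewrite disk_dels_ge ?Jnth_gt0.
apply: det_unitrig => [|i]; last by rewrite mxE /Cbridge eqxx dels0.
apply/is_trig_mxP => i j lt_ij; rewrite mxE /Cbridge.
have lt_ij' : (Jnth i < Jnth j)%N by rewrite ltn_Jnth.
by rewrite gtn_eqF // dels0 // ltnW.
Qed.

Lemma det_link_mx pos : \det (1%:M + (link_mx pos)^T) = 1.
Proof.
apply: det_unitrig => [|i]; last by rewrite !mxE eqxx ltnn andbF addr0.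
apply/is_trig_mxP => i j lt_ij; rewrite !mxE.
have /negbTE neq_ij : i != j by rewrite neq_ltn lt_ij.
by rewrite neq_ij ltnNge (ltnW lt_ij) andbF addr0.
Qed.

Lemma crossing_mx_factor :
  crossing_mx = (1%:M + (link_mx true)^T) *m (1%:M + link_mx false).
Proof.
have links0 : (link_mx true)^T *m link_mx false = 0.
  apply/matrixP => i j; rewrite !mxE; apply: big1 => l _; rewrite !mxE.
  by case: (0 < _) => /=; rewrite ?mul0r ?mulr0.
by rewrite mulmxDl !mulmxDr !mul1mx mulmx1 links0 addr0 /crossing_mx.
Qed.

Lemma unitmx_exchange_mx : exchange_mx \in unitmx.
Proof.
have trE : (1%:M + link_mx false)^T = 1%:M + (link_mx false)^T.
  by rewrite raddfD /= trmx1.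
rewrite unitmxE /exchange_mx crossing_mx_factor !det_mulmx det_tr.
rewrite -(det_tr (1%:M + link_mx false)) trE !det_link_mx det_chain_mx.
by rewrite !mulr1 unitr1.
Qed.

End ExchangeMatrix.

Unset Implicit Arguments.

Theorem theorem5p9 (n : nat) (u : {perm 'I_n}) (beta : seq int) :
  (2 <= n)%N -> wf_word n beta -> below_word n u beta ->
  forall v : nat -> int, exists lam : nat -> int,
    forall d : nat, d \in mutable_vertices n u beta ->
      (\sum_(c <- Jset n u beta) lam c * exchange n u beta c d)%R = v d.
Proof.
move=> _ wf _ v; pose E := exchange_mx u beta.
pose lr := Jrow u beta (fun c => - v c) *m invmx E.
exists (Jfun lr) => d; rewrite mem_filter => /andP[_ dJ].
have [b ->] : exists b : 'I_(size (Jset n u beta)), d = Jnth b.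
  by exists (Ordinal (etrans (index_mem d _) dJ)); rewrite /Jnth nth_index.
rewrite (big_Jset u beta predT) /=.
under eq_bigr => i _ do rewrite Jfun_nth exchangeE // mulrN.
rewrite sumrN -/E.
have -> : \sum_i lr 0 i * E i b = (lr *m E) 0 b by rewrite mxE.
by rewrite mulmxKV ?unitmx_exchange_mx // mxE opprK.
Qed.
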